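(* Let $a, r \in \mathbb{R}$ with $a > r > 0$, and let $\digamma$ be the anchor ring in $\mathbb{E}^{3}$ parametrized by $\boldsymbol{x}(t,\varphi) = \big((a + r\cos t)\cos\varphi,\ (a + r\cos t)\sin\varphi,\ r\sin t\big)$. Then the Gauss map $\boldsymbol{n}$ of $\digamma$ is of infinite type with respect to the first fundamental form; that is, there is no integer $m \geq 1$ and no real numbers $c_{1}, \dots, c_{m}$ such that $(\Delta^{I})^{m}\boldsymbol{n} + c_{1}(\Delta^{I})^{m-1}\boldsymbol{n} + \cdots + c_{m-1}\Delta^{I}\boldsymbol{n} + c_{m}\boldsymbol{n} = \mathbf{0}$.
   Context: An anchor ring is a tube in $\mathbb{E}^3$ of constant radius $r$ around a plane circle (or an open portion of a plane circle) of radius $a>r$. With $\gamma = a + r\cos t$, its first fundamental form is $I = r^{2}dt^{2} + \gamma^{2}d\varphi^{2}$, and its Gauss map is $\boldsymbol{n} = (-\cos t\cos\varphi, -\cos t\sin\varphi, -\sin t)$. For a surface with first fundamental form $I = g_{ij}du^{i}du^{j}$, the Beltrami–Laplace operator is $\Delta^{I} f = -\frac{1}{\sqrt{g}}\big(\sqrt{g}\, g^{ij} f_{i}\big)_{j}$, where $g = \det(g_{ij})$ and $(g^{ij})$ is the inverse of $(g_{ij})$; for the anchor ring this is $\Delta^{I} = -\frac{1}{\gamma^{2}}\frac{\partial^{2}}{\partial\varphi^{2}} + \frac{\sin t}{r\gamma}\frac{\partial}{\partial t} - \frac{1}{r^{2}}\frac{\partial^{2}}{\partial t^{2}}$, applied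 componentwise to vector-valued maps. A vector-valued map $\boldsymbol{n}$ on the surface is of finite type if $\boldsymbol{n} = \boldsymbol{c} + \sum_{i=1}^{k}\boldsymbol{n}_{i}$ for a constant vector $\boldsymbol{c}$ and finitely many nonconstant eigenvectors $\boldsymbol{n}_i$ of $\Delta^{I}$; otherwise it is of infinite type. The paper uses the criterion that finite type implies a relation of the form $(\Delta^{I})^{m}\boldsymbol{n} + c_{1}(\Delta^{I})^{m-1}\boldsymbol{n} + \cdots + c_{m}\boldsymbol{n} = \mathbf{0}$. *)

From Stdlib Require Import Reals.
From Coquelicot Require Import Coquelicot.
Open Scope R_scope.

Definition gam (a r t : R) : R := a + r * cos t.

(* Beltrami-Laplace operator of the first fundamental form
   I = r^2 dt^2 + gamma^2 dphi^2 of the anchor ring, acting on a scalar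
   function f(t, phi):
   Delta f = -1/gamma^2 f_phiphi + sin t/(r gamma) f_t - 1/r^2 f_tt. *)
Definition DeltaI (a r : R) (f : R -> R -> R) : R -> R -> R :=
  fun t p =>
    - / (gam a r t ^ 2) * Derive (fun q => Derive (fun q' => f t q') q) p
    + sin t / (r * gam a r t) * Derive (fun s => f s p) t
    - / (r ^ 2) * Derive (fun s => Derive (fun s' => f s' p) s) t.

Fixpoint DeltaI_iter (a r : R) (k : nat) (f : R -> R -> R) : R -> R -> R :=
  match k with
  | O => f
  | S k' => DeltaI a r (DeltaI_iter a r k' f)
  end.

Definition gauss_n (i : nat) : R -> R -> R :=
  fun t p =>
    match i with
    | O => - (cos t * cos p)
    | 1%nat => - (cos t * sin p)
    | _ => - sin t
    end.

Definition finite_type_lhs (a r : R) (m : nat) (c : nat -> R) (i : nat) (t p : R) : R :=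
  DeltaI_iter a r m (gauss_n i) t p
  + sum_f 1 m (fun j => c j * DeltaI_iter a r (m - j) (gauss_n i) t p).

From Stdlib Require Import Reals Lra Lia List FunctionalExtensionality.
From Coquelicot Require Import Coquelicot.
Import ListNotations.
Open Scope R_scope.

(** Writing
    [gamma = a + r cos t], each iterate has the shape
    [(Delta^I)^k n_3 = sin t * N_k(cos t) / gamma^(e_k)] with a polynomial [N_k]
    and [e_0 = 0], [e_k = 2k - 1] for [k >= 1].  Multiplying a finite-type
    relation by [gamma^(e_m) / sin t] gives a polynomial identity
    [T(cos t) = 0], hence [T = 0].  But at the root [x0 = -a/r] of [a + r x]
    (which lies outside [[-1, 1]]) every term of [T] except [N_m] vanishes,
    while [N_{k+1}(x0) = - e_k^2 (1 - x0^2) N_k(x0)] for [k >= 1] and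
    [N_0(x0)], [N_1(x0)] are nonzero, so [N_m(x0) <> 0]. *)

Fixpoint peval (l : list R) (x : R) : R :=
  match l with nil => 0 | c :: l' => c + x * peval l' x end.

Fixpoint padd (l1 l2 : list R) : list R :=
  match l1, l2 with
  | nil, _ => l2
  | _, nil => l1
  | c1 :: t1, c2 :: t2 => (c1 + c2) :: padd t1 t2
  end.

Definition pscale (k : R) (l : list R) : list R := map (fun c => k * c) l.

Fixpoint pmul (l1 l2 : list R) : list R :=
  match l1 with nil => nil | c :: t => padd (pscale c l2) (0 :: pmul t l2) end.

Fixpoint pderiv (l : list R) : list R :=
  match l with nil => nil | _ :: t => padd t (0 :: pderiv t) end.

Lemma peval_add l1 l2 x : peval (padd l1 l2) x = peval l1 x + peval l2 x.
Proof.
  revert l2; induction l1 as [|c t IH]; intros [|c2 t2]; simpl; try ring.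
  rewrite IH; ring.
Qed.

Lemma peval_scale k l x : peval (pscale k l) x = k * peval l x.
Proof. induction l as [|c t IH]; simpl; [|rewrite IH]; ring. Qed.

Lemma peval_mul l1 l2 x : peval (pmul l1 l2) x = peval l1 x * peval l2 x.
Proof.
  induction l1 as [|c t IH]; simpl; [ring|].
  rewrite peval_add, peval_scale; simpl; rewrite IH; ring.
Qed.

Lemma is_derive_peval l x : is_derive (peval l) x (peval (pderiv l) x).
Proof.
  induction l as [|c t IH]; simpl.
  - auto_derive; reflexivity.
  - rewrite peval_add; simpl.
    auto_derive; [exists (peval (pderiv t) x); exact IH|].
    rewrite (is_derive_unique (fun y : R => peval t y) _ _ IH); ring.
Qed.

Lemma continuous_eq0_from_right (f : R -> R) (x : R) :
  continuous f x -> (forall y, x < y < x + 1 -> f y = 0) -> f x = 0.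
Proof.
  intros Hf Hvanish.
  apply (filterlim_locally_unique
           (FF := Proper_StrongProper _ (at_right_proper_filter x)) f).
  - exact (filterlim_filter_le_1 _ (filter_le_within _) Hf).
  - apply (filterlim_ext_loc (fun _ => 0)); [|apply filterlim_const].
    exists (mkposreal 1 Rlt_0_1); intros y Hy Hxy.
    apply Rabs_lt_between' in Hy; simpl in Hy.
    rewrite Hvanish; lra.
Qed.

Lemma peval_eq0_from_unit_interval l :
  (forall x, 0 < x < 1 -> peval l x = 0) -> forall x, peval l x = 0.
Proof.
  induction l as [|c t IH]; intros Hvanish x; simpl; [reflexivity|].
  assert (Hc : c = 0).
  { replace c with (peval (c :: t) 0) by (simpl; ring).
    apply (continuous_eq0_from_right (peval (c :: t)) 0).
    - exact (ex_derive_continuous _ _ (ex_intro _ _ (is_derive_peval _ _))).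
    - intros y Hy; apply Hvanish; lra. }
  subst c; rewrite IH; [ring|].
  intros y Hy; specialize (Hvanish y Hy); simpl in Hvanish.
  apply (Rmult_eq_reg_l y); lra.
Qed.

Definition is_poly (f : R -> R) : Prop := exists l, forall x, f x = peval l x.

Lemma is_poly_eq0_from_unit_interval f :
  is_poly f -> (forall x, 0 < x < 1 -> f x = 0) -> forall x, f x = 0.
Proof.
  intros [l Hl] Hvanish x; rewrite Hl.
  apply peval_eq0_from_unit_interval; intros y Hy; rewrite <- Hl; auto.
Qed.

Lemma is_poly_const c : is_poly (fun _ => c).
Proof. exists [c]; intros; simpl; ring. Qed.

Lemma is_poly_peval l : is_poly (peval l).
Proof. exists l; reflexivity. Qed.

Lemma is_poly_id : is_poly (fun x => x).
Proof. exists [0; 1]; intros; simpl; ring. Qed.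

Lemma is_poly_plus f g : is_poly f -> is_poly g -> is_poly (fun x => f x + g x).
Proof.
  intros [l1 H1] [l2 H2]; exists (padd l1 l2); intros; rewrite peval_add, H1, H2; reflexivity.
Qed.

Lemma is_poly_mult f g : is_poly f -> is_poly g -> is_poly (fun x => f x * g x).
Proof.
  intros [l1 H1] [l2 H2]; exists (pmul l1 l2); intros; rewrite peval_mul, H1, H2; reflexivity.
Qed.

Lemma is_poly_pow f n : is_poly f -> is_poly (fun x => f x ^ n).
Proof.
  intros Hf; induction n as [|n IH]; simpl; [apply is_poly_const | apply is_poly_mult; auto].
Qed.

Lemma is_poly_sum_f_R0 (F : nat -> R -> R) n :
  (forall i, is_poly (F i)) -> is_poly (fun x => sum_f_R0 (fun i => F i x) n).
Proof.
  intros HF; induction n as [|n IH]; simpl; [apply HF | apply is_poly_plus; auto].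
Qed.

Lemma inv_pow_split (y : R) (e E : nat) :
  y <> 0 -> (e <= E)%nat -> / y ^ e = y ^ (E - e) / y ^ E.
Proof.
  intros Hy HeE.
  replace E with (e + (E - e))%nat at 2 by lia.
  rewrite pow_add; field; split; apply pow_nonzero; exact Hy.
Qed.

Section AnchorRing.

Variables (a r : R).
Hypotheses (Hr : 0 < r) (Har : r < a).

Lemma gam_pos t : 0 < gam a r t.
Proof. unfold gam; pose proof (COS_bound t); nra. Qed.

(** [P(cos t) / gamma^k] is even in [t] and [sin t * P(cos t) / gamma^k] odd;
    differentiation in [t] exchanges the two shapes. *)
Definition even_profile (P : list R) (k : nat) (t : R) : R :=
  peval P (cos t) / gam a r t ^ k.

Definition odd_profile (N : list R) (k : nat) (t : R) : R :=
  sin t * even_profile N k t.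

Definition deriv_even (k : nat) (P : list R) : list R :=
  padd (pscale (-1) (pmul (pderiv P) [a; r])) (pscale (INR k * r) P).

Definition deriv_odd (k : nat) (N : list R) : list R :=
  padd (pmul (pmul [0; 1] N) [a; r]) (pmul [1; 0; -1] (deriv_even k N)).

Definition laplace_odd (k : nat) (N : list R) : list R :=
  padd (pscale (/ r) (deriv_odd k N))
       (pscale (- / r ^ 2) (deriv_even (S k) (deriv_odd k N))).

Lemma peval_deriv_even k P x :
  peval (deriv_even k P) x = - (peval (pderiv P) x * (a + r * x)) + INR k * r * peval P x.
Proof. unfold deriv_even; rewrite peval_add, !peval_scale, peval_mul; simpl; ring. Qed.

Lemma peval_deriv_odd k N x :
  peval (deriv_odd k N) x
  = x * peval N x * (a + r * x) + (1 - x ^ 2) * peval (deriv_even k N) x.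
Proof. unfold deriv_odd; rewrite peval_add, !peval_mul; simpl; ring. Qed.

Lemma peval_laplace_odd k N x :
  peval (laplace_odd k N) x
  = peval (deriv_odd k N) x / r - peval (deriv_even (S k) (deriv_odd k N)) x / r ^ 2.
Proof. unfold laplace_odd; rewrite peval_add, !peval_scale; field; lra. Qed.

Lemma is_derive_even_profile P k t :
  is_derive (even_profile P k) t
    (sin t * peval (deriv_even k P) (cos t) / gam a r t ^ S k).
Proof.
  pose proof (gam_pos t) as Hg; unfold even_profile, gam in *.
  auto_derive.
  - split; [eexists; apply is_derive_peval | split; [apply pow_nonzero; lra | exact I]].
  - rewrite (is_derive_unique (fun y : R => peval P y) _ _ (is_derive_peval P (cos t))).
    rewrite peval_deriv_even.
    destruct k as [|k]; simpl; field; repeat split; try apply pow_nonzero; lra.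
Qed.

Lemma is_derive_odd_profile N k t :
  is_derive (odd_profile N k) t (even_profile (deriv_odd k N) (S k) t).
Proof.
  pose proof (gam_pos t) as Hg.
  pose proof (is_derive_even_profile N k t) as HE.
  unfold odd_profile; auto_derive; [eexists; exact HE|].
  rewrite (is_derive_unique (fun s : R => even_profile N k s) _ _ HE); unfold even_profile.
  rewrite peval_deriv_odd.
  replace (cos t ^ 2) with (1 - sin t ^ 2) by (rewrite <- (sin2_cos2 t); unfold Rsqr; ring).
  unfold gam in *; simpl; field; split; [apply pow_nonzero|]; lra.
Qed.

Lemma DeltaI_odd_profile N k t p :
  DeltaI a r (fun s _ => odd_profile N k s) t p = odd_profile (laplace_odd k N) (S (S k)) t.
Proof.
  pose proof (gam_pos t) as Hg.
  unfold DeltaI.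
  rewrite (Derive_ext _ (fun _ => 0)) by (intros; apply Derive_const).
  rewrite Derive_const.
  rewrite (is_derive_unique (fun s : R => odd_profile N k s) _ _ (is_derive_odd_profile N k t)).
  rewrite (Derive_ext (fun s => Derive (fun s' : R => odd_profile N k s') s)
                      (even_profile (deriv_odd k N) (S k)))
    by (intros; apply is_derive_unique, is_derive_odd_profile).
  rewrite (is_derive_unique _ _ _ (is_derive_even_profile _ _ t)).
  unfold odd_profile, even_profile; rewrite peval_laplace_odd; simpl.
  field; repeat split; try apply pow_nonzero; lra.
Qed.

Fixpoint normal3_coef (k : nat) : list R :=
  match k with
  | O => [-1]
  | 1%nat => [- a / r ^ 2; - 2 / r]
  | S (S j as k') => laplace_odd (2 * j + 1) (normal3_coef k')
  end.

Definition normal3_exp (k : nat) : nat :=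
  match k with O => O | S j => (2 * j + 1)%nat end.

Lemma normal3_exp_le k m : (k <= m)%nat -> (normal3_exp k <= normal3_exp m)%nat.
Proof. destruct k, m; simpl; lia. Qed.

Lemma normal3_exp_lt k m : (k < m)%nat -> (normal3_exp k < normal3_exp m)%nat.
Proof. destruct k, m; simpl; lia. Qed.

Lemma DeltaI_iter_gauss_n2 k :
  DeltaI_iter a r k (gauss_n 2) = fun t _ => odd_profile (normal3_coef k) (normal3_exp k) t.
Proof.
  assert (Hn3 : gauss_n 2 = fun t _ => odd_profile [-1] 0 t).
  { extensionality t; extensionality p.
    unfold gauss_n, odd_profile, even_profile; simpl; field. }
  induction k as [|[|j] IH]; [exact Hn3| |];
    change (DeltaI_iter a r (S ?k) ?f) with (DeltaI a r (DeltaI_iter a r k f));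
    rewrite IH; extensionality t; extensionality p; rewrite DeltaI_odd_profile.
  - pose proof (gam_pos t) as Hg.
    unfold odd_profile, even_profile; rewrite peval_laplace_odd.
    unfold deriv_odd, deriv_even, gam in *; simpl.
    field; lra.
  - replace (normal3_exp (S (S j))) with (S (S (normal3_exp (S j)))) by (simpl; lia).
    reflexivity.
Qed.

Lemma peval_laplace_odd_root k N :
  peval (laplace_odd k N) (- a / r) = - INR k ^ 2 * (1 - (a / r) ^ 2) * peval N (- a / r).
Proof.
  rewrite peval_laplace_odd, peval_deriv_even, !peval_deriv_odd, peval_deriv_even, S_INR.
  replace (a + r * (- a / r)) with 0 by (field; lra).
  field; lra.
Qed.

Lemma normal3_coef_root_neq0 k : peval (normal3_coef k) (- a / r) <> 0.
Proof.
  assert (Hout : 1 - (a / r) ^ 2 < 0).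
  { assert (1 < a / r) by (apply Rlt_div_r; lra). nra. }
  induction k as [|[|j] IH].
  - simpl; lra.
  - simpl; intro E; field_simplify in E; [|lra].
    assert (a / r ^ 2 = 0) by (rewrite <- E; field; lra).
    assert (0 < a / r ^ 2) by (apply Rdiv_lt_0_compat; [lra | apply pow_lt; lra]).
    lra.
  - change (peval (laplace_odd (2 * j + 1) (normal3_coef (S j))) (- a / r) <> 0).
    rewrite peval_laplace_odd_root.
    assert (0 < INR (2 * j + 1)) by (apply lt_0_INR; lia).
    intro E; apply Rmult_integral in E as [E|E]; [|exact (IH E)].
    assert (0 < INR (2 * j + 1) ^ 2 * - (1 - (a / r) ^ 2))
      by (apply Rmult_lt_0_compat; [apply pow_lt|]; lra).
    lra.
Qed.

Definition relation_poly (m : nat) (c : nat -> R) (x : R) : R :=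
  peval (normal3_coef m) x
  + sum_f 1 m (fun j => c j * (peval (normal3_coef (m - j)) x
                               * (a + r * x) ^ (normal3_exp m - normal3_exp (m - j)))).

Lemma finite_type_lhs_gauss_n2 m c t p :
  finite_type_lhs a r m c 2 t p
  = sin t / gam a r t ^ normal3_exp m * relation_poly m c (cos t).
Proof.
  pose proof (gam_pos t) as Hg.
  unfold finite_type_lhs, relation_poly, sum_f.
  rewrite !DeltaI_iter_gauss_n2, Rmult_plus_distr_l, scal_sum.
  unfold odd_profile, even_profile; f_equal; [field; apply pow_nonzero; lra|].
  apply sum_eq; intros i Hi; rewrite DeltaI_iter_gauss_n2.
  unfold odd_profile, even_profile, Rdiv.
  rewrite (inv_pow_split (gam a r t) _ (normal3_exp m)) by (lra || apply normal3_exp_le; lia).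
  unfold gam; field; apply pow_nonzero; unfold gam in Hg; lra.
Qed.

Lemma is_poly_relation_poly m c : is_poly (relation_poly m c).
Proof.
  unfold relation_poly, sum_f.
  apply is_poly_plus; [apply is_poly_peval|].
  apply is_poly_sum_f_R0; intros i.
  apply is_poly_mult; [apply is_poly_const | apply is_poly_mult; [apply is_poly_peval|]].
  apply is_poly_pow, is_poly_plus; [apply is_poly_const | apply is_poly_mult, is_poly_id].
  apply is_poly_const.
Qed.

Lemma relation_poly_root_neq0 m c : (1 <= m)%nat -> relation_poly m c (- a / r) <> 0.
Proof.
  intros Hm; unfold relation_poly, sum_f.
  rewrite (sum_eq _ (fun _ => 0)), sum_cte, Rmult_0_l, Rplus_0_r
    by (intros i Hi; replace (a + r * (- a / r)) with 0 by (field; lra);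
        rewrite pow_i by (apply lt_minus_O_lt, normal3_exp_lt; lia); ring).
  apply normal3_coef_root_neq0.
Qed.

End AnchorRing.

Theorem theorem1 (a r : R) (Hr : 0 < r) (Har : r < a) :
  ~ (exists (m : nat) (c : nat -> R) (phi0 phi1 : R),
       (1 <= m)%nat /\ phi0 < phi1 /\
       forall (i : nat) (t p : R), (i < 3)%nat -> phi0 < p < phi1 ->
         finite_type_lhs a r m c i t p = 0).
Proof.
  intros [m [c [phi0 [phi1 [Hm [Hphi Hrel]]]]]].
  apply (relation_poly_root_neq0 a r Hr Har m c Hm).
  apply is_poly_eq0_from_unit_interval; [apply is_poly_relation_poly|].
  intros x Hx.
  assert (Hsin : 0 < sin (acos x))
    by (apply sin_gt_0; apply acos_bound_lt; lra).
  assert (Hg : 0 < gam a r (acos x) ^ normal3_exp m)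
    by (apply pow_lt, gam_pos; assumption).
  specialize (Hrel 2%nat (acos x) ((phi0 + phi1) / 2) ltac:(lia) ltac:(lra)).
  rewrite finite_type_lhs_gauss_n2, cos_acos in Hrel by (assumption || lra).
  apply Rmult_integral in Hrel as [Hfactor|]; [|assumption].
  exfalso; assert (0 < sin (acos x) / gam a r (acos x) ^ normal3_exp m)
    by (apply Rdiv_lt_0_compat; assumption).
  lra.
Qed.
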